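(* The group $\mathbb{Z}^2=\langle a,b\mid aba^{-1}b^{-1}\rangle$ is $5$-chordal with respect to the generating set $\{a,b\}$.
   Context: For a group $G$ with finite generating set $S$, $S^{\pm1}=S\cup S^{-1}\setminus\{e\}$. A relation $s_1\cdots s_n=e$ with $n>2$, $s_i\in S^{\pm1}$, is simple if $s_p\cdots s_q=e$ holds exactly when $(p,q)=(1,n)$. $G$ is $k$-chordal with respect to $S$ if for every simple relation $s_1\cdots s_n=e$ with $n\ge k$ there exist $1\le i<j\le n$ and $s'_1,\dots,s'_r\in S^{\pm1}$ with $s_i\cdots s_j=s'_1\cdots s'_r$ and $r\le\min\{j-i,\,n-j+i-2\}$. *)

From Stdlib Require Import ZArith List Lia.
Import ListNotations.

Section Chordal.
Context {G : Type} (mul : G -> G -> G) (e : G) (inv : G -> G).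

Definition wprod (w : list G) : G := fold_right mul e w.

(* the subword s_p ... s_q (1-indexed, inclusive) *)
Definition seg (w : list G) (p q : nat) : list G :=
  firstn (S q - p) (skipn (p - 1) w).

Definition Spm (S : list G) (x : G) : Prop :=
  (In x S \/ exists y, In y S /\ x = inv y) /\ x <> e.

Definition simple_relation (S : list G) (w : list G) : Prop :=
  2 < length w /\ Forall (Spm S) w /\
  forall p q, 1 <= p -> p <= q -> q <= length w ->
    (wprod (seg w p q) = e <-> (p = 1 /\ q = length w)).

(* k-chordal; the bound r <= min (j-i) (n-j+i-2) is written without
   truncated subtraction: r <= j - i and r + 2 + j <= n + i. *)
Definition chordal (k : nat) (S : list G) : Prop :=
  forall w, simple_relation S w -> k <= length w ->
    exists i j, 1 <= i /\ i < j /\ j <= length w /\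
      exists w', Forall (Spm S) w' /\ wprod (seg w i j) = wprod w' /\
        length w' <= j - i /\ length w' + 2 + j <= length w + i.
End Chordal.

Definition Z2mul (x y : Z * Z) : Z * Z := (fst x + fst y, snd x + snd y)%Z.
Definition Z2e : Z * Z := (0, 0)%Z.
Definition Z2inv (x : Z * Z) : Z * Z := (- fst x, - snd x)%Z.
Definition gen_a : Z * Z := (1, 0)%Z.
Definition gen_b : Z * Z := (0, 1)%Z.

From Stdlib Require Import ZArith List Lia Classical.
Import ListNotations.

(* In an abelian group a subword [a u a^-1] can be replaced by [u], so a
   simple relation of length [n] admits a chord as soon as it contains two
   mutually inverse letters enclosing at most [n/2 - 2] letters.  A relation
   over [{a^±1, b^±1}] in [Z^2] uses each letter as often as its inverse, so it
   has even length [n = 2m].  If no two inverse letters were that close, every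
   window of [m] consecutive letters would use at most one letter per axis;
   comparing the two halves with the windows shifted by one letter forces each
   half to consist of two letters, each occurring once, i.e. [n = 4]. *)

Lemma simple_relation_wprod {G} (mul : G -> G -> G) e inv gens w :
  simple_relation mul e inv gens w -> wprod mul e w = e.
Proof.
  intros [Hlen [_ Hsimp]].
  assert (Hseg : seg w 1 (length w) = w)
    by (unfold seg; simpl; rewrite Nat.sub_0_r; apply firstn_all).
  rewrite <- Hseg; apply Hsimp; lia.
Qed.

Section AbelianWords.
Variables (G : Type) (mul : G -> G -> G) (e : G) (inv : G -> G).
Hypothesis mulA : forall x y z, mul x (mul y z) = mul (mul x y) z.
Hypothesis mulC : forall x y, mul x y = mul y x.
Hypothesis mul1g : forall x, mul e x = x.
Hypothesis mulVg : forall x, mul (inv x) x = e.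

Lemma wprod_app l r : wprod mul e (l ++ r) = mul (wprod mul e l) (wprod mul e r).
Proof.
  unfold wprod; induction l as [|x l IH]; simpl.
  - now rewrite mul1g.
  - now rewrite IH, mulA.
Qed.

Lemma wprod_cancel a l : wprod mul e (a :: l ++ [inv a]) = wprod mul e l.
Proof.
  simpl; rewrite wprod_app; simpl.
  now rewrite (mulC (inv a) e), mul1g, (mulC _ (inv a)), mulA, (mulC a), mulVg, mul1g.
Qed.

Lemma seg_infix (l1 s l3 : list G) :
  seg (l1 ++ s ++ l3) (S (length l1)) (length l1 + length s) = s.
Proof.
  unfold seg.
  replace (S (length l1 + length s) - S (length l1)) with (length s) by lia.
  replace (S (length l1) - 1) with (length l1) by lia.
  rewrite skipn_app, skipn_all, Nat.sub_diag; simpl.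
  rewrite firstn_app, firstn_all, Nat.sub_diag; simpl.
  apply app_nil_r.
Qed.

Lemma cancelling_pair_chord (gens : list G) w l1 a l2 l3 :
  w = l1 ++ (a :: l2 ++ [inv a]) ++ l3 -> Forall (Spm e inv gens) l2 ->
  2 * length l2 + 3 <= length w ->
  exists i j, 1 <= i /\ i < j /\ j <= length w /\
    exists w', Forall (Spm e inv gens) w' /\ wprod mul e (seg w i j) = wprod mul e w' /\
      length w' <= j - i /\ length w' + 2 + j <= length w + i.
Proof.
  intros -> Hl2 Hlen.
  exists (S (length l1)), (length l1 + length (a :: l2 ++ [inv a])).
  rewrite seg_infix, wprod_cancel.
  assert (Hs : length (a :: l2 ++ [inv a]) = length l2 + 2)
    by (simpl; rewrite length_app; simpl; lia).
  rewrite !length_app, Hs in *.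
  repeat split; try lia.
  exists l2; repeat split; auto; lia.
Qed.

End AbelianWords.

Lemma Z2mul_assoc x y z : Z2mul x (Z2mul y z) = Z2mul (Z2mul x y) z.
Proof. unfold Z2mul; simpl; f_equal; lia. Qed.

Lemma Z2mul_comm x y : Z2mul x y = Z2mul y x.
Proof. unfold Z2mul; f_equal; lia. Qed.

Lemma Z2mul_1l x : Z2mul Z2e x = x.
Proof. destruct x; reflexivity. Qed.

Lemma Z2mul_Vl x : Z2mul (Z2inv x) x = Z2e.
Proof. unfold Z2mul, Z2inv, Z2e; simpl; f_equal; lia. Qed.

Inductive dir := East | North | West | South.

Definition vec (d : dir) : Z * Z :=
  match d with
  | East => (1, 0) | North => (0, 1) | West => (-1, 0) | South => (0, -1)
  end%Z.

Definition opp (d : dir) : dir :=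
  match d with East => West | North => South | West => East | South => North end.

Definition dir_eq_dec (x y : dir) : {x = y} + {x <> y}.
Proof. decide equality. Defined.

Local Notation cnt := (count_occ dir_eq_dec).

Lemma opp_opp d : opp (opp d) = d.
Proof. now destruct d. Qed.

Lemma opp_neq d : opp d <> d.
Proof. now destruct d. Qed.

Lemma vec_opp d : vec (opp d) = Z2inv (vec d).
Proof. now destruct d. Qed.

Lemma Spm_vec d : Spm Z2e Z2inv [gen_a; gen_b] (vec d).
Proof.
  split; [|now destruct d].
  destruct d; simpl.
  - left; auto.
  - left; auto.
  - right; exists gen_a; auto.
  - right; exists gen_b; auto.
Qed.

Lemma Spm_words w :
  Forall (Spm Z2e Z2inv [gen_a; gen_b]) w -> exists ds, w = map vec ds.
Proof.
  induction 1 as [|x w [[Hx|[y [Hy ->]]] _] _ [ds ->]]; [now exists []|..].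
  - destruct Hx as [<-|[<-|[]]]; [exists (East :: ds)|exists (North :: ds)]; auto.
  - destruct Hy as [<-|[<-|[]]]; [exists (West :: ds)|exists (South :: ds)]; auto.
Qed.

Lemma wprod_vec ds :
  wprod Z2mul Z2e (map vec ds) =
  (Z.of_nat (cnt ds East) - Z.of_nat (cnt ds West),
   Z.of_nat (cnt ds North) - Z.of_nat (cnt ds South))%Z.
Proof.
  unfold wprod; induction ds as [|d ds IH]; [reflexivity|].
  simpl; rewrite IH; unfold Z2mul; destruct d; cbn -[Z.add Z.sub Z.of_nat]; f_equal; lia.
Qed.

Lemma length_counts ds :
  length ds = cnt ds East + cnt ds North + cnt ds West + cnt ds South.
Proof. induction ds as [|d ds IH]; [reflexivity|]. destruct d; simpl; lia. Qed.

Definition balanced (ds : list dir) : Prop := forall d, cnt ds d = cnt ds (opp d).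

Lemma balanced_of_wprod ds : wprod Z2mul Z2e (map vec ds) = Z2e -> balanced ds.
Proof.
  rewrite wprod_vec; intros [= HEW HNS] d.
  destruct d; simpl; lia.
Qed.

Lemma balanced_length ds :
  balanced ds -> length ds = 2 * (cnt ds East + cnt ds North).
Proof.
  intros Hbal; rewrite length_counts.
  specialize (Hbal East) as HE; specialize (Hbal North) as HN; simpl in *; lia.
Qed.

Definition opposite_free (l : list dir) : Prop := forall d, In d l -> ~ In (opp d) l.

Definition has_short_opposite_pair (k : nat) (ds : list dir) : Prop :=
  exists l1 a l2 l3, ds = l1 ++ (a :: l2 ++ [opp a]) ++ l3 /\ length l2 + 2 <= k.

Lemma opposite_pair_short l d :
  In d l -> In (opp d) l -> has_short_opposite_pair (length l) l.
Proof.
  intros Hd Hod.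
  apply in_split in Hd as [s1 [s2 ->]].
  rewrite length_app; simpl.
  apply in_app_or in Hod as [Ho|[Ho|Ho]].
  - apply in_split in Ho as [t1 [t2 ->]].
    exists t1, (opp d), t2, s2; rewrite opp_opp, length_app; simpl.
    split; [now rewrite <- !app_assoc|lia].
  - now destruct (opp_neq d).
  - apply in_split in Ho as [t1 [t2 ->]].
    exists s1, d, t1, t2; rewrite length_app; simpl.
    split; [now rewrite <- !app_assoc|lia].
Qed.

Lemma opposite_free_of_infix k ds pre l post :
  ~ has_short_opposite_pair k ds -> ds = pre ++ l ++ post -> length l <= k ->
  opposite_free l.
Proof.
  intros Hfar -> Hl d Hd Hod.
  destruct (opposite_pair_short l d Hd Hod) as [l1 [a [l2 [l3 [-> Hl2]]]]].
  apply Hfar; exists (pre ++ l1), a, l2, (l3 ++ post).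
  split; [now rewrite <- !app_assoc|lia].
Qed.

Lemma opposite_free_count l d : opposite_free l -> cnt l d = 0 \/ cnt l (opp d) = 0.
Proof.
  intros Hl; rewrite <- !count_occ_not_In.
  destruct (In_dec dir_eq_dec d l); auto.
Qed.

Lemma opposite_free_halves h1 h2 :
  opposite_free h1 -> opposite_free h2 -> balanced (h1 ++ h2) ->
  forall d, cnt h2 d = cnt h1 (opp d).
Proof.
  intros H1 H2 Hbal d.
  specialize (Hbal d); rewrite !count_occ_app in Hbal.
  destruct (opposite_free_count h1 d H1), (opposite_free_count h2 d H2); lia.
Qed.

Lemma opposite_free_two_letters l p q :
  opposite_free l -> In p l -> In q l -> p <> q ->
  forall c, In c l -> c = p \/ c = q.
Proof.
  intros Hl Hp Hq Hpq c Hc.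
  assert (c <> opp p) by (intros ->; now apply (Hl p)).
  assert (c <> opp q) by (intros ->; now apply (Hl q)).
  assert (q <> opp p) by (intros ->; now apply (Hl p)).
  destruct p, q, c; simpl in *; auto; congruence.
Qed.

Lemma length_le_two_counts l p q :
  (forall c, In c l -> c = p \/ c = q) -> length l <= cnt l p + cnt l q.
Proof.
  induction l as [|c l IH]; simpl; intros Hl; [lia|].
  specialize (IH (fun c' Hc' => Hl c' (or_intror Hc'))).
  destruct (Hl c (or_introl eq_refl)) as [->| ->];
    destruct (dir_eq_dec p p), (dir_eq_dec p q), (dir_eq_dec q p), (dir_eq_dec q q);
    congruence || lia.
Qed.

Lemma far_balanced_half_length_le_two m x t1 u z t2 y :
  let ds := (x :: t1 ++ [u]) ++ (z :: t2 ++ [y]) in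
  length (x :: t1 ++ [u]) = m -> length (z :: t2 ++ [y]) = m -> balanced ds ->
  ~ has_short_opposite_pair m ds -> length (x :: t1 ++ [u]) <= 2.
Proof.
  intros ds L1 L2 Hbal Hfar.
  assert (F1 : opposite_free (x :: t1 ++ [u]))
    by (apply (opposite_free_of_infix m ds []) with (z :: t2 ++ [y]); auto; lia).
  assert (F2 : opposite_free (z :: t2 ++ [y]))
    by (apply (opposite_free_of_infix m ds (x :: t1 ++ [u])) with []; auto;
        [now rewrite app_nil_r | lia]).
  pose proof (opposite_free_halves _ _ F1 F2 Hbal) as Hcnt.
  assert (Wz : ~ In (opp z) (t1 ++ [u])).
  { intros Hin.
    apply (opposite_free_of_infix m ds [x] (t1 ++ [u] ++ [z]) (t2 ++ [y]) Hfar) with z.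
    - unfold ds; simpl; now rewrite <- !app_assoc.
    - simpl in L1; rewrite !length_app in *; simpl in *; lia.
    - apply in_or_app; right; simpl; auto.
    - rewrite app_assoc; apply in_or_app; auto. }
  assert (Wu : ~ In (opp u) (z :: t2)).
  { intros Hin.
    apply (opposite_free_of_infix m ds (x :: t1) (u :: z :: t2) [y] Hfar) with u.
    - unfold ds; simpl; now rewrite <- !app_assoc.
    - simpl in L2 |- *; rewrite !length_app in *; simpl in *; lia.
    - simpl; auto.
    - right; exact Hin. }
  assert (Cz : cnt (x :: t1 ++ [u]) (opp z) <= 1).
  { change (x :: t1 ++ [u]) with ([x] ++ t1 ++ [u]).
    rewrite count_occ_app, (proj1 (count_occ_not_In _ _ _) Wz).
    pose proof (count_occ_bound dir_eq_dec (opp z) [x]); simpl in *; lia. }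
  assert (Cu : cnt (x :: t1 ++ [u]) u <= 1).
  { rewrite <- (opp_opp u) at 2; rewrite <- Hcnt, app_comm_cons, count_occ_app.
    rewrite (proj1 (count_occ_not_In _ _ _) Wu).
    pose proof (count_occ_bound dir_eq_dec (opp u) [y]); simpl in *; lia. }
  assert (Iz : In (opp z) (x :: t1 ++ [u])).
  { apply count_occ_In with dir_eq_dec; rewrite <- Hcnt; simpl.
    destruct (dir_eq_dec z z); [lia|congruence]. }
  assert (Iu : In u (x :: t1 ++ [u])) by (right; apply in_or_app; simpl; auto).
  assert (Hzu : opp z <> u) by (intros Heq; apply Wz; rewrite Heq; apply in_or_app; simpl; auto).
  pose proof (length_le_two_counts _ _ _ (opposite_free_two_letters _ _ _ F1 Iz Iu Hzu)).
  lia.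
Qed.

Lemma balanced_has_short_opposite_pair m ds :
  3 <= m -> length ds = 2 * m -> balanced ds -> has_short_opposite_pair m ds.
Proof.
  intros Hm Hlen Hbal.
  apply NNPP; intros Hfar.
  assert (L1 : length (firstn m ds) = m) by (rewrite length_firstn; lia).
  assert (L2 : length (skipn m ds) = m) by (rewrite length_skipn; lia).
  rewrite <- (firstn_skipn m ds) in Hbal, Hfar.
  destruct (firstn m ds) as [|x t1]; [simpl in L1; lia|].
  destruct (exists_last (l := t1)) as [t1' [u ->]]; [intros ->; simpl in L1; lia|].
  destruct (skipn m ds) as [|z t2]; [simpl in L2; lia|].
  destruct (exists_last (l := t2)) as [t2' [y ->]]; [intros ->; simpl in L2; lia|].
  pose proof (far_balanced_half_length_le_two m x t1' u z t2' y L1 L2 Hbal Hfar).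
  lia.
Qed.

Theorem proposition1 : chordal Z2mul Z2e Z2inv 5 [gen_a; gen_b].
Proof.
  intros w Hrel H5.
  pose proof (simple_relation_wprod _ _ _ _ _ Hrel) as He.
  destruct Hrel as [_ [Hsp _]].
  destruct (Spm_words w Hsp) as [ds ->].
  rewrite length_map in H5.
  pose proof (balanced_of_wprod ds He) as Hbal.
  pose proof (balanced_length ds Hbal) as Hlen.
  destruct (balanced_has_short_opposite_pair (cnt ds East + cnt ds North) ds
              ltac:(lia) Hlen Hbal) as [l1 [a [l2 [l3 [Hds Hl2]]]]].
  apply (cancelling_pair_chord _ _ _ _ Z2mul_assoc Z2mul_comm Z2mul_1l Z2mul_Vl)
    with (map vec l1) (vec a) (map vec l2) (map vec l3).
  - rewrite Hds, !map_app; simpl; rewrite map_app; simpl; now rewrite vec_opp.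
  - apply Forall_map, Forall_forall; intros; apply Spm_vec.
  - rewrite !length_map; lia.
Qed.
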